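(* Let $k\in\mathbb{R}\setminus\{0,-1\}$, $p=1+\frac1k$, and define $M(x,y)=x^pF_k(y/x)$ for $x>0$, $y\ge0$. Then for all $x>0$, $y>0$, $$M_{yy}\Big(M_{xx}+\frac{M_y}{y}\Big)-M_{xy}^2=0,$$ and the matrix $$\begin{pmatrix} M_{xx}+\frac{M_y}{y} & M_{xy}\\ M_{xy} & M_{yy}\end{pmatrix}$$ is negative semidefinite if $p\in\mathbb{R}\setminus[0,1]$ (i.e. $k>-1$) and positive semidefinite if $p\in(0,1)$ (i.e. $k<-1$). Moreover $M(x,0)=x^p$.
   Context: For real $k$, the Hermite function $H_k:\mathbb{R}\to\mathbb{R}$ is the (unique) solution of $H_k''(x)-xH_k'(x)+kH_k(x)=0$ with $H_k(x)=x^k+o(x^k)$ as $x\to+\infty$. For $k>0$ let $R_k$ be the rightmost real zero of $H_k$, and $R_k=-\infty$ if $k\le0$. For $k\in\mathbb{R}\setminus\{0,-1\}$ the map $q\mapsto |H_k'(q)/H_k(q)|$ is a decreasing bijection of $(R_k,\infty)$ onto $(0,\infty)$, and $F_k:[0,\infty)\to\mathbb{R}$ is defined by $F_k(|H_k'(q)/H_k(q)|)=H_{k+1}(q)/H_k(q)^{1+1/k}$ for $q\in(R_k,\infty)$, together with $F_k(0)=1$. *)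

From Stdlib Require Import Reals Lra ClassicalEpsilon.
Open Scope R_scope.

Definition hermite_asymp (k : R) (H : R -> R) : Prop :=
  forall eps, 0 < eps -> exists A, forall x, A < x -> 0 < x ->
    Rabs (H x / Rpower x k - 1) < eps.

(* H solves H'' - x H' + k H = 0 on R (twice differentiable) and H(x) = x^k + o(x^k).
   By uniqueness, this characterizes the Hermite function H_k. *)
Definition is_hermite (k : R) (H : R -> R) : Prop :=
  (exists H1 H2 : R -> R,
     (forall x, derivable_pt_lim H x (H1 x)) /\
     (forall x, derivable_pt_lim H1 x (H2 x)) /\
     (forall x, H2 x - x * H1 x + k * H x = 0)) /\
  hermite_asymp k H.

(* q lies in (R_k, +oo): R_k = rightmost real zero of H_k when k > 0,
   R_k = -oo when k <= 0. *)
Definition in_dom (k : R) (H : R -> R) (q : R) : Prop :=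
  if Rlt_dec 0 k then (forall z, H z = 0 -> z < q) else True.

(* F_k defined by F_k(|H_k'(q)/H_k(q)|) = H_{k+1}(q)/H_k(q)^{1+1/k} for q in (R_k,oo),
   and F_k(0) = 1.  H = H_k, Hd = H_k', G = H_{k+1}. *)
Definition Fk (k : R) (H Hd G : R -> R) (t : R) : R :=
  if Req_EM_T t 0 then 1 else
  epsilon (inhabits 0) (fun v => exists q, in_dom k H q /\
     t = Rabs (Hd q / H q) /\ v = G q / Rpower (H q) (1 + / k)).

Definition Mfun (k : R) (H Hd G : R -> R) (x y : R) : R :=
  Rpower x (1 + / k) * Fk k H Hd G (y / x).

Definition nsd2 (a b c : R) : Prop :=
  forall u v, a * u * u + 2 * b * u * v + c * v * v <= 0.
Definition psd2 (a b c : R) : Prop :=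
  forall u v, 0 <= a * u * u + 2 * b * u * v + c * v * v.

(* On the domain [(R_k, +oo)] the Hermite function [H = H_k] is positive and its
   logarithmic derivative [u = H'/H] solves the Riccati equation [u' = q u - k - u^2].
   Comparing with the asymptotics [H ~ q^k] shows that [sg k * u] is a decreasing
   bijection onto [(0, +oo)] with [sg k * (q u - k - u^2) < 0].  Moreover
   [H_{k+1} = q H - H'], since both sides solve the Hermite equation of index [k+1]
   with the same leading behaviour.  Hence, writing [q(t)] for the inverse of
   [sg k * u] and [R = H(q)^(1/k)],
     [F_k = (q - u) / R],  [F_k' = - sg k * p / R],  [F_k'' = p u / (k R (q u - k - u^2))],
   so that [F'' (p (p-1) F + F' / t) = (p-1)^2 F'^2].  For the [p]-homogeneous
   [M (x, y) = x^p F (y/x)] this ODE is exactly the vanishing determinant, and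
   [M_yy = x^(p-2) F''] has the sign of [- (k + 1)]. *)

From Stdlib Require Import Reals ClassicalEpsilon.
From Stdlib Require Import Lra Psatz Classical Ranalysis5.
Open Scope R_scope.

Local Notation D f x l := (derivable_pt_lim f x l).

(** * Differentiation and the mean value theorem *)

Lemma derivable_pt_lim_eq f x l l' : D f x l -> l = l' -> D f x l'.
Proof. now intros ? <-. Qed.

Lemma dconst c x : D (fun _ => c) x 0.
Proof. apply derivable_pt_lim_const. Qed.

Lemma did x : D (fun y => y) x 1.
Proof. apply derivable_pt_lim_id. Qed.

Lemma dplus f g x a b : D f x a -> D g x b -> D (fun y => f y + g y) x (a + b).
Proof. apply derivable_pt_lim_plus. Qed.

Lemma dminus f g x a b : D f x a -> D g x b -> D (fun y => f y - g y) x (a - b).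
Proof. apply derivable_pt_lim_minus. Qed.

Lemma dmul f g x a b : D f x a -> D g x b ->
  D (fun y => f y * g y) x (a * g x + f x * b).
Proof. apply derivable_pt_lim_mult. Qed.

Lemma dscal c f x a : D f x a -> D (fun y => c * f y) x (c * a).
Proof.
  intros Hf. eapply derivable_pt_lim_eq.
  - apply (dmul (fun _ => c) f); [apply dconst|exact Hf].
  - ring.
Qed.

Lemma dcomp f g x a b : D g x a -> D f (g x) b -> D (fun y => f (g y)) x (b * a).
Proof. intros; now apply derivable_pt_lim_comp. Qed.

Lemma dinv f x a : f x <> 0 -> D f x a -> D (fun y => / f y) x (- a / f x ^ 2).
Proof.
  intros Hn Hf.
  assert (Hq := derivable_pt_lim_div (fun _ => 1) f x 0 a (dconst 1 x) Hf Hn).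
  eapply derivable_pt_lim_ext; [|eapply derivable_pt_lim_eq; [apply Hq|]].
  - intros y. unfold div_fct, Rdiv. ring.
  - unfold Rsqr. field. exact Hn.
Qed.

Lemma dexp f x a : D f x a -> D (fun y => exp (f y)) x (exp (f x) * a).
Proof. intros Hf. apply (dcomp exp f x a); [exact Hf|apply derivable_pt_lim_exp]. Qed.

Lemma drpow e x : 0 < x -> D (fun s => Rpower s e) x (e * Rpower x e / x).
Proof.
  intros Hx. eapply derivable_pt_lim_eq; [now apply derivable_pt_lim_power|].
  unfold Rminus. rewrite Rpower_plus, Rpower_Ropp, Rpower_1 by exact Hx. field. lra.
Qed.

Lemma dexp_lin c x : D (fun y => exp (c * y)) x (exp (c * x) * c).
Proof.
  apply dexp. eapply derivable_pt_lim_eq; [apply dscal, did|ring].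
Qed.

Lemma dgauss x : D (fun y => exp (- (y * y) / 2)) x (exp (- (x * x) / 2) * - x).
Proof.
  assert (Hq : D (fun y => - (y * y) / 2) x (- x)).
  { apply (derivable_pt_lim_ext (fun y => - / 2 * (y * y))); [intros; field|].
    eapply derivable_pt_lim_eq; [apply dscal, dmul; apply did|]. cbv beta. field. }
  exact (dexp _ x _ Hq).
Qed.

Lemma Rpower_pos x e : 0 < Rpower x e.
Proof. apply exp_pos. Qed.

Lemma Rpower_neq0 x e : Rpower x e <> 0.
Proof. apply Rgt_not_eq, Rpower_pos. Qed.

Lemma Rpower_pred x e : 0 < x -> Rpower x e = x * Rpower x (e - 1).
Proof.
  intros Hx. rewrite <- (Rpower_1 x) at 2 by exact Hx.
  rewrite <- Rpower_plus. f_equal. ring.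
Qed.

Lemma exp_opp_mul_inv c x : exp (- c * x) * exp (c * x) = 1.
Proof. rewrite <- exp_plus, <- exp_0. f_equal. ring. Qed.

Lemma Rabs_between x : - Rabs x <= x <= Rabs x.
Proof. unfold Rabs; destruct Rcase_abs; lra. Qed.

Lemma le_of_deriv_nonneg f f' a b : a <= b -> (forall c, a <= c <= b -> D f c (f' c)) ->
  (forall c, a < c < b -> 0 <= f' c) -> f a <= f b.
Proof.
  intros Hab Hd Hp. destruct (Req_dec a b) as [->|Hne]; [lra|].
  destruct (MVT_cor2 f f' a b) as [c [Hc1 Hc2]]; [lra|auto|].
  assert (0 <= f' c * (b - a)) by (apply Rmult_le_pos; [apply Hp; auto|lra]). lra.
Qed.

Lemma lt_of_deriv_pos f f' a b : a < b -> (forall c, a <= c <= b -> D f c (f' c)) ->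
  (forall c, a < c < b -> 0 < f' c) -> f a < f b.
Proof.
  intros Hab Hd Hp.
  destruct (MVT_cor2 f f' a b) as [c [Hc1 Hc2]]; [lra|auto|].
  assert (0 < f' c * (b - a)) by (apply Rmult_lt_0_compat; [apply Hp; auto|lra]). lra.
Qed.

Lemma ge_of_deriv_nonpos f f' a b : a <= b -> (forall c, a <= c <= b -> D f c (f' c)) ->
  (forall c, a < c < b -> f' c <= 0) -> f b <= f a.
Proof.
  intros Hab Hd Hp.
  enough (- f a <= - f b) by lra.
  apply (le_of_deriv_nonneg (fun y => - f y) (fun y => - f' y)); auto.
  - intros c Hc. now apply derivable_pt_lim_opp with (f := f), Hd.
  - intros c Hc. specialize (Hp c Hc). lra.
Qed.

Lemma gt_of_deriv_neg f f' a b : a < b -> (forall c, a <= c <= b -> D f c (f' c)) ->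
  (forall c, a < c < b -> f' c < 0) -> f b < f a.
Proof.
  intros Hab Hd Hp.
  enough (- f a < - f b) by lra.
  apply (lt_of_deriv_pos (fun y => - f y) (fun y => - f' y)); auto.
  - intros c Hc. now apply derivable_pt_lim_opp with (f := f), Hd.
  - intros c Hc. specialize (Hp c Hc). lra.
Qed.

Lemma eq_of_deriv_zero f a b : a <= b -> (forall c, a <= c <= b -> D f c 0) -> f a = f b.
Proof.
  intros Hab Hd. apply Rle_antisym.
  - apply (le_of_deriv_nonneg f (fun _ => 0)); auto; intros; lra.
  - apply (ge_of_deriv_nonpos f (fun _ => 0)); auto; intros; lra.
Qed.

Lemma exp_lower_bound_of_deriv f f' a c : (forall x, D f x (f' x)) ->
  (forall x, a <= x -> c * f x <= f' x) ->
  forall x, a <= x -> f a * exp (- c * a) * exp (c * x) <= f x.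
Proof.
  intros Hd Hb x Hx.
  assert (Hmono : f a * exp (- c * a) <= f x * exp (- c * x)).
  { apply (le_of_deriv_nonneg (fun y => f y * exp (- c * y))
       (fun y => f' y * exp (- c * y) + f y * (exp (- c * y) * - c))); auto.
    - intros y _. apply (dmul f (fun y => exp (- c * y))); [apply Hd|apply dexp_lin].
    - intros y Hy. specialize (Hb y ltac:(lra)).
      assert (0 < exp (- c * y)) by apply exp_pos. nra. }
  assert (E := exp_opp_mul_inv c x). assert (0 < exp (c * x)) by apply exp_pos.
  replace (f x) with (f x * exp (- c * x) * exp (c * x)) by (rewrite Rmult_assoc, E; ring).
  nra.
Qed.

Lemma exp_upper_bound_of_deriv f f' a c : (forall x, D f x (f' x)) ->
  (forall x, a <= x -> f' x <= - c * f x) ->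
  forall x, a <= x -> f x <= f a * exp (c * a) * exp (- c * x).
Proof.
  intros Hd Hb x Hx.
  assert (Hneg := exp_lower_bound_of_deriv (fun y => - f y) (fun y => - f' y) a (- c)).
  replace (- - c * a) with (c * a) in Hneg by ring.
  enough (- f a * exp (c * a) * exp (- c * x) <= - f x) by lra.
  apply Hneg; [intros y; now apply derivable_pt_lim_opp with (f := f)| |exact Hx].
  intros y Hy. specialize (Hb y Hy). lra.
Qed.

Lemma zero_of_gronwall E E' C x0 y : (forall z, D E z (E' z)) -> (forall z, 0 <= E z) ->
  (forall z, Rmin x0 y <= z <= Rmax x0 y -> Rabs (E' z) <= C * E z) ->
  E x0 = 0 -> E y = 0.
Proof.
  intros HdE Hpos Hb H0. apply Rle_antisym; [|apply Hpos].
  destruct (Rle_lt_dec x0 y) as [Hle|Hlt].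
  - rewrite Rmin_left, Rmax_right in Hb by lra.
    assert (Hmono : E y * exp (- C * y) <= E x0 * exp (- C * x0)).
    { apply (ge_of_deriv_nonpos (fun z => E z * exp (- C * z))
        (fun z => E' z * exp (- C * z) + E z * (exp (- C * z) * - C))); auto.
      - intros z _. apply (dmul E (fun z => exp (- C * z))); [apply HdE|apply dexp_lin].
      - intros z Hz. specialize (Hb z ltac:(lra)). pose proof (Rabs_between (E' z)).
        assert (0 < exp (- C * z)) by apply exp_pos. nra. }
    rewrite H0 in Hmono. assert (0 < exp (- C * y)) by apply exp_pos. nra.
  - rewrite Rmin_right, Rmax_left in Hb by lra.
    assert (Hmono : E y * exp (C * y) <= E x0 * exp (C * x0)).
    { apply (le_of_deriv_nonneg (fun z => E z * exp (C * z))
        (fun z => E' z * exp (C * z) + E z * (exp (C * z) * C))); try lra.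
      - intros z _. apply (dmul E (fun z => exp (C * z))); [apply HdE|apply dexp_lin].
      - intros z Hz. specialize (Hb z ltac:(lra)). pose proof (Rabs_between (E' z)).
        assert (0 < exp (C * z)) by apply exp_pos. nra. }
    rewrite H0 in Hmono. assert (0 < exp (C * y)) by apply exp_pos. nra.
Qed.

Lemma deriv_nonneg_of_right_min f x l d : 0 < d -> D f x l ->
  (forall y, x < y < x + d -> f x <= f y) -> 0 <= l.
Proof.
  intros Hd Hf Hy. destruct (Rle_lt_dec 0 l) as [|Hl]; auto. exfalso.
  destruct (Hf (- l / 2)) as [del Hdel]; [lra|].
  assert (Hm : 0 < Rmin del d) by (apply Rmin_pos; [apply cond_pos|lra]).
  set (h := Rmin del d / 2).
  assert (Hh1 : h < del) by (pose proof (Rmin_l del d); unfold h; lra).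
  assert (Hh2 : h < d) by (pose proof (Rmin_r del d); unfold h; lra).
  assert (Hh0 : 0 < h) by (unfold h; lra).
  assert (Hq := Hy (x + h) ltac:(lra)).
  specialize (Hdel h ltac:(lra) ltac:(rewrite Rabs_right; lra)).
  apply Rabs_def2 in Hdel.
  assert (0 <= (f (x + h) - f x) / h) by
    (unfold Rdiv; apply Rmult_le_pos; [lra|left; now apply Rinv_0_lt_compat]).
  lra.
Qed.

Lemma continuity_of_deriv f f' : (forall x, D f x (f' x)) -> continuity f.
Proof. intros Hf x. apply derivable_continuous_pt. exists (f' x). apply Hf. Qed.

Lemma last_zero_before f z b : continuity f -> z < b -> f z <= 0 -> 0 < f b ->
  exists x, z <= x < b /\ f x = 0 /\ forall y, x < y <= b -> 0 < f y.
Proof.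
  intros Hc Hzb Hz Hb.
  set (E := fun y => z <= y <= b /\ f y <= 0).
  destruct (completeness E) as [m [Hub Hlub]].
  { exists b. intros y [Hy _]. lra. }
  { exists z. split; [lra|exact Hz]. }
  assert (Hzm : z <= m) by (apply Hub; split; [lra|exact Hz]).
  assert (Hmb : m <= b) by (apply Hlub; intros y [Hy _]; lra).
  assert (Hright : forall y, m < y <= b -> 0 < f y).
  { intros y Hy. destruct (Rlt_le_dec 0 (f y)) as [|Hy']; auto.
    assert (y <= m) by (apply Hub; split; [lra|exact Hy']). lra. }
  assert (Hm_le : f m <= 0).
  { destruct (Rle_lt_dec (f m) 0) as [|Hpos]; auto. exfalso.
    destruct (Hc m (f m) Hpos) as [alp [Ha Hal]].
    assert (Hnot : ~ (forall y, E y -> y <= m - alp)).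
    { intros Hall. assert (m <= m - alp) by (apply Hlub; exact Hall). lra. }
    apply not_all_ex_not in Hnot. destruct Hnot as [y Hy].
    apply imply_to_and in Hy. destruct Hy as [Ey Hy].
    assert (y <= m) by (apply Hub; exact Ey). destruct Ey as [_ Hfy].
    destruct (Req_dec y m) as [->|Hym]; [lra|].
    assert (Hd : D_x no_cond m y /\ R_dist y m < alp).
    { split; [split; [constructor|auto]|]. unfold R_dist. rewrite Rabs_left; lra. }
    specialize (Hal y Hd). simpl in Hal. unfold R_dist in Hal.
    apply Rabs_def2 in Hal. lra. }
  assert (Hm0 : f m = 0).
  { destruct Hm_le as [Hneg|]; auto. exfalso.
    assert (Hmb' : m < b) by (destruct Hmb; auto; subst; lra).
    destruct (IVT f m b Hc Hmb' Hneg Hb) as [w [Hw Hfw]].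
    destruct (Req_dec w m) as [->|Hwm]; [lra|].
    specialize (Hright w ltac:(lra)). lra. }
  exists m. split; [split; auto|split; auto].
  destruct Hmb as [|Hmb]; auto. subst. lra.
Qed.

Lemma derivable_pt_lim_inverse (f g f' : R -> R) (P : R -> Prop) a b x :
  a < x < b ->
  (forall t, a <= t <= b -> P (g t) /\ f (g t) = t) ->
  (forall q, P q -> D f q (f' q)) ->
  (forall q1 q2, P q1 -> q1 < q2 -> f q1 < f q2) ->
  (forall q1 q, P q1 -> q1 <= q -> P q) ->
  f' (g x) <> 0 -> D g x (1 / f' (g x)).
Proof.
  intros Hx Hg Hd Hinc Hup Hnz.
  assert (Hgi : forall t1 t2, a <= t1 -> t1 < t2 -> t2 <= b -> g t1 < g t2).
  { intros t1 t2 H1 H2 H3. destruct (Rlt_le_dec (g t1) (g t2)) as [|Hle]; auto. exfalso.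
    destruct (Hg t1 ltac:(lra)) as [P1 E1]. destruct (Hg t2 ltac:(lra)) as [P2 E2].
    destruct Hle as [Hle|Hle].
    - pose proof (Hinc _ _ P2 Hle). lra.
    - rewrite Hle in E2. lra. }
  assert (Hgle : forall t1 t2, a <= t1 -> t1 <= t2 -> t2 <= b -> g t1 <= g t2).
  { intros t1 t2 H1 [H2|H2] H3; [left; apply Hgi; lra|subst; lra]. }
  destruct (Hg a ltac:(lra)) as [Pa Ea]. destruct (Hg b ltac:(lra)) as [Pb Eb].
  assert (Hab : g a < g b) by (apply Hgi; lra).
  assert (HPi : forall q, g a <= q -> P q) by (intros q Hq; apply (Hup (g a)); auto).
  assert (Hcont : continuity_pt g x).
  { apply (continuity_pt_recip_interv f g (g a) (g b) Hab).
    - intros y z Hy Hyz Hz. apply Hinc; auto.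
    - intros y Hy1 Hy2. rewrite Ea, Eb in *. unfold comp, id. apply Hg; lra.
    - intros y Hy1 Hy2. rewrite Ea, Eb in *. split; apply Hgle; lra.
    - intros q Hq. apply derivable_continuous_pt. exists (f' q). apply Hd, HPi; lra.
    - rewrite Ea, Eb; lra. }
  set (Prf := fun (y : R) (Hy : g a <= y <= g b) =>
     exist (fun l => D f y l) (f' y) (Hd y (HPi y (proj1 Hy))) : derivable_pt f y).
  assert (Hgx : g a <= g x <= g b) by (split; apply Hgle; lra).
  apply (derivable_pt_lim_recip_interv f g a b x Prf Hcont ltac:(lra) Hx Hgx); auto.
  intros y Hy. unfold comp, id. apply Hg; auto.
Qed.

(** * Growth of [x ^ k] against exponentials *)

Lemma ln_le_sub1 y : 0 < y -> ln y <= y - 1.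
Proof.
  intros Hy. pose proof (exp_ineq1_le (ln y)) as He. rewrite exp_ln in He by exact Hy. lra.
Qed.

Lemma ln_nonneg x : 1 <= x -> 0 <= ln x.
Proof.
  intros Hx. rewrite <- ln_1. destruct (Req_dec x 1) as [->|]; [lra|].
  left. apply ln_increasing; lra.
Qed.

Lemma ln_le_2sqrt x : 0 < x -> ln x <= 2 * sqrt x.
Proof.
  intros Hx. assert (Hs : 0 < sqrt x) by (apply sqrt_lt_R0; auto).
  replace x with (sqrt x * sqrt x) at 1 by (apply sqrt_sqrt; lra).
  rewrite ln_mult by exact Hs. pose proof (ln_le_sub1 _ Hs). lra.
Qed.

Lemma linear_beats_log c K C L : 0 < c ->
  exists x, L < x /\ 1 <= x /\ K * ln x + C < c * x.
Proof.
  intros Hc. set (r := 1 + Rabs L + (2 * Rabs K + Rabs C + 1) / c).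
  pose proof (Rle_abs L). pose proof (Rabs_pos L). pose proof (Rabs_pos K).
  pose proof (Rle_abs C). pose proof (Rabs_pos C).
  assert (Hcr : c * r = c * (1 + Rabs L) + (2 * Rabs K + Rabs C + 1))
    by (unfold r; field; lra).
  assert (Hr1 : 1 <= r).
  { unfold r. enough (0 <= (2 * Rabs K + Rabs C + 1) / c) by lra.
    unfold Rdiv. apply Rmult_le_pos; [lra|left; now apply Rinv_0_lt_compat]. }
  assert (L < r) by (unfold r in *; nra).
  exists (r * r). split; [nra|split; [nra|]].
  assert (Hln := ln_le_2sqrt (r * r) ltac:(nra)).
  rewrite sqrt_square in Hln by lra.
  pose proof (ln_nonneg (r * r) ltac:(nra)).
  assert (K * ln (r * r) <= 2 * Rabs K * r).
  { destruct (Rle_lt_dec 0 K).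
    - rewrite Rabs_right by lra. nra.
    - rewrite Rabs_left by lra. nra. }
  nra.
Qed.

Lemma Rpower_large k M a : 0 < k -> exists x, a < x /\ M < Rpower x k.
Proof.
  intros Hk. set (y := Rabs M / k + Rabs a + 1).
  pose proof (Rle_abs M). pose proof (Rle_abs a).
  assert (0 <= Rabs M / k).
  { unfold Rdiv. apply Rmult_le_pos; [apply Rabs_pos|left; now apply Rinv_0_lt_compat]. }
  assert (Hky : k * y = Rabs M + k * (Rabs a + 1)) by (unfold y; field; lra).
  pose proof (exp_ineq1_le y). pose proof (exp_ineq1_le (k * y)). pose proof (Rabs_pos a).
  exists (exp y). unfold Rpower. rewrite ln_exp.
  split; [unfold y in *|]; nra.
Qed.

Section Hermite_asymptotics.

Variables (k : R) (H : R -> R).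
Hypothesis asymp : hermite_asymp k H.

Lemma hermite_asymp_bounds :
  exists A, 0 < A /\ forall x, A < x -> Rpower x k / 2 < H x < 3 * Rpower x k / 2.
Proof.
  destruct (asymp (1/2)) as [A HA]; [lra|].
  pose proof (Rle_abs A). pose proof (Rabs_pos A).
  exists (Rabs A + 1). split; [lra|]. intros x Hx.
  specialize (HA x ltac:(lra) ltac:(lra)). apply Rabs_def2 in HA.
  assert (Hp := Rpower_pos x k).
  assert (E : H x = (H x / Rpower x k) * Rpower x k) by (field; lra).
  split; rewrite E; nra.
Qed.

Lemma hermite_asymp_eventually_pos : exists A, 0 < A /\ forall x, A < x -> 0 < H x.
Proof.
  destruct hermite_asymp_bounds as [A [HA0 HA]]. exists A. split; auto.
  intros x Hx. specialize (HA x Hx). pose proof (Rpower_pos x k). lra.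
Qed.

Lemma hermite_asymp_not_exp_growth a c m : 0 < c -> 0 < m ->
  ~ (forall x, a <= x -> m * exp (c * x) <= H x).
Proof.
  intros Hc Hm Hg. destruct hermite_asymp_bounds as [A [HA0 HA]].
  destruct (linear_beats_log c k (ln (3/2) - ln m) (Rmax A a) Hc) as [x [Hx1 [Hx2 Hx3]]].
  pose proof (Rmax_l A a). pose proof (Rmax_r A a).
  specialize (HA x ltac:(lra)). specialize (Hg x ltac:(lra)).
  assert (Hexp : exp (k * ln x + ln (3/2)) < exp (ln m + c * x))
    by (apply exp_increasing; lra).
  rewrite !exp_plus, !exp_ln in Hexp by lra. unfold Rpower in HA. lra.
Qed.

Lemma hermite_asymp_not_exp_decay a c M : 0 < c ->
  ~ (forall x, a <= x -> H x <= M * exp (- c * x)).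
Proof.
  intros Hc Hg. destruct hermite_asymp_bounds as [A [HA0 HA]].
  set (M' := Rmax M 1). pose proof (Rmax_r M 1). pose proof (Rmax_l M 1).
  destruct (linear_beats_log c (- k) (ln M' - ln (1/2)) (Rmax A a) Hc)
    as [x [Hx1 [Hx2 Hx3]]].
  pose proof (Rmax_l A a). pose proof (Rmax_r A a).
  specialize (HA x ltac:(lra)). specialize (Hg x ltac:(lra)).
  assert (Hexp : exp (ln M' + - c * x) < exp (ln (1/2) + k * ln x))
    by (apply exp_increasing; lra).
  rewrite !exp_plus, !exp_ln in Hexp by (unfold M'; lra). unfold Rpower in HA.
  assert (M * exp (- c * x) <= M' * exp (- c * x))
    by (apply Rmult_le_compat_r; [left; apply exp_pos|auto]).
  lra.
Qed.

Lemma hermite_asymp_unbounded a M : 0 < k -> ~ (forall x, a <= x -> H x <= M).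
Proof.
  intros Hk Hg. destruct hermite_asymp_bounds as [A [HA0 HA]].
  destruct (Rpower_large k (2 * M) (Rmax A a) Hk) as [x [Hx HxM]].
  pose proof (Rmax_l A a). pose proof (Rmax_r A a).
  specialize (HA x ltac:(lra)). specialize (Hg x ltac:(lra)). lra.
Qed.

Lemma hermite_asymp_no_pos_lower_bound a m : k < 0 -> 0 < m ->
  ~ (forall x, a <= x -> m <= H x).
Proof.
  intros Hk Hm Hg. destruct hermite_asymp_bounds as [A [HA0 HA]].
  destruct (Rpower_large (- k) (3 / (2 * m)) (Rmax A a) ltac:(lra)) as [x [Hx HxM]].
  pose proof (Rmax_l A a). pose proof (Rmax_r A a).
  specialize (HA x ltac:(lra)). specialize (Hg x ltac:(lra)).
  rewrite Rpower_Ropp in HxM. assert (HP := Rpower_pos x k).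
  assert (Hq : 3 < 2 * m / Rpower x k) by
    (apply (Rmult_lt_compat_l (2 * m)) in HxM; [|lra]; field_simplify in HxM; lra).
  apply (Rmult_lt_compat_r (Rpower x k)) in Hq; [|exact HP].
  field_simplify in Hq; lra.
Qed.

Lemma hermite_asymp_sq_le_gauss c : 0 < c ->
  exists x0, forall x, x0 <= x -> 0 < H x /\ H x ^ 2 <= c * exp (x * x / 2).
Proof.
  intros Hc. destruct hermite_asymp_bounds as [A [HA0 HA]].
  set (L := ln (9/4) - ln c).
  pose proof (Rabs_pos k). pose proof (Rabs_pos L).
  exists (Rmax A (4 * Rabs k + 2 * Rabs L + 2) + 1). intros x Hx.
  pose proof (Rmax_l A (4 * Rabs k + 2 * Rabs L + 2)).
  pose proof (Rmax_r A (4 * Rabs k + 2 * Rabs L + 2)).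
  specialize (HA x ltac:(lra)). unfold Rpower in HA.
  assert (0 < exp (k * ln x)) by apply exp_pos.
  split; [lra|].
  assert (Hln := ln_le_sub1 x ltac:(lra)). assert (Hln0 := ln_nonneg x ltac:(lra)).
  assert (Hkl : 2 * (k * ln x) <= 2 * Rabs k * x) by (pose proof (Rabs_between k); nra).
  assert (Hxx : 2 * Rabs k * x + Rabs L <= x * x / 2) by nra.
  assert (Hl : ln (9/4) + 2 * (k * ln x) <= ln c + x * x / 2)
    by (pose proof (Rabs_between L); unfold L in *; lra).
  assert (He : exp (ln (9/4) + (k * ln x + k * ln x)) <= exp (ln c + x * x / 2)).
  { destruct Hl as [Hl|Hl]; [left; apply exp_increasing; lra|right; f_equal; lra]. }
  rewrite !exp_plus, !exp_ln in He by lra. simpl. nra.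
Qed.

End Hermite_asymptotics.

Lemma hermite_asymp_ratio_sub k f g : hermite_asymp k f -> hermite_asymp k g ->
  forall e, 0 < e -> exists X, forall x, X < x -> 0 < f x /\ Rabs ((f x - g x) / f x) < e.
Proof.
  intros Hf Hg e He.
  set (d := Rmin (1/2) (e / 8)).
  assert (Hd : 0 < d) by (apply Rmin_pos; lra).
  assert (Hd1 : d <= 1/2) by apply Rmin_l. assert (Hde : d <= e / 8) by apply Rmin_r.
  destruct (Hf d Hd) as [A1 HA1]. destruct (Hg d Hd) as [A2 HA2].
  exists (Rmax (Rmax A1 A2) 0). intros x Hx.
  pose proof (Rmax_l (Rmax A1 A2) 0). pose proof (Rmax_r (Rmax A1 A2) 0).
  pose proof (Rmax_l A1 A2). pose proof (Rmax_r A1 A2).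
  specialize (HA1 x ltac:(lra) ltac:(lra)). specialize (HA2 x ltac:(lra) ltac:(lra)).
  apply Rabs_def2 in HA1. apply Rabs_def2 in HA2.
  assert (HP := Rpower_pos x k).
  set (a := f x / Rpower x k) in *. set (b := g x / Rpower x k) in *.
  assert (Hfx : f x = a * Rpower x k) by (unfold a; field; lra).
  split; [rewrite Hfx; nra|].
  replace ((f x - g x) / f x) with ((a - b) / a) by (unfold a, b; field; split; nra).
  unfold Rdiv. rewrite Rabs_mult, Rabs_inv, (Rabs_right a) by lra.
  apply Rlt_le_trans with (4 * d); [|lra].
  apply Rmult_lt_reg_r with a; [lra|]. rewrite Rmult_assoc, Rinv_l, Rmult_1_r by lra.
  apply Rabs_def1; nra.
Qed.

(** * The Hermite equation *)

Lemma energy_deriv_bound f f1 z k R : Rabs z <= R ->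
  Rabs (2 * f * f1 + 2 * f1 * (z * f1 - k * f)) <= (1 + Rabs k + 2 * R) * (f * f + f1 * f1).
Proof.
  intros Hz. apply Rabs_le.
  pose proof (Rabs_between z). pose proof (Rabs_between k). pose proof (Rabs_pos k).
  assert (0 <= (f - f1) * (f - f1)) by apply Rle_0_sqr.
  assert (0 <= (f + f1) * (f + f1)) by apply Rle_0_sqr.
  assert (0 <= f1 * f1) by apply Rle_0_sqr. assert (0 <= f * f) by apply Rle_0_sqr.
  assert (0 <= (Rabs k - k) * ((f + f1) * (f + f1))) by (apply Rmult_le_pos; lra).
  assert (0 <= (Rabs k + k) * ((f - f1) * (f - f1))) by (apply Rmult_le_pos; lra).
  assert (0 <= (R - z) * (f1 * f1)) by (apply Rmult_le_pos; lra).
  assert (0 <= (R + z) * (f1 * f1)) by (apply Rmult_le_pos; lra).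
  assert (0 <= R * (f * f)) by (apply Rmult_le_pos; lra).
  assert (0 <= Rabs k * (f * f + f1 * f1)) by (apply Rmult_le_pos; lra).
  split; nra.
Qed.

Definition hermite_ode (k : R) (H H1 H2 : R -> R) : Prop :=
  (forall x, D H x (H1 x)) /\ (forall x, D H1 x (H2 x)) /\
  (forall x, H2 x - x * H1 x + k * H x = 0).

Lemma hermite_ode_of_is_hermite k H Hd : is_hermite k H -> (forall x, D H x (Hd x)) ->
  exists H2, hermite_ode k H Hd H2.
Proof.
  intros [[H1 [H2 [dH [dH1 Ho]]]] _] dHd.
  assert (E : forall x, H1 x = Hd x) by (intros x; eapply uniqueness_limite; eauto).
  exists H2. split; [exact dHd|split]; intros x.
  - exact (derivable_pt_lim_ext H1 Hd x _ E (dH1 x)).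
  - rewrite <- E. apply Ho.
Qed.

Section Hermite_ODE.

Variables (k : R) (H H1 H2 : R -> R).
Hypothesis ode : hermite_ode k H H1 H2.

Lemma hermite_second_deriv x : H2 x = x * H1 x - k * H x.
Proof. destruct ode as [_ [_ Ho]]. specialize (Ho x). lra. Qed.

Lemma hermite_continuous : continuity H.
Proof. destruct ode as [dH _]. exact (continuity_of_deriv H H1 dH). Qed.

Lemma deriv_gauss_hermite x :
  D (fun y => H1 y * exp (- (y * y) / 2)) x (- k * H x * exp (- (x * x) / 2)).
Proof.
  destruct ode as [_ [dH1 _]].
  eapply derivable_pt_lim_eq; [apply (dmul H1 (fun y => exp (- (y * y) / 2))), dgauss|].
  - apply dH1.
  - rewrite hermite_second_deriv. ring.
Qed.

Lemma hermite_ode_zero_data x0 : H x0 = 0 -> H1 x0 = 0 -> forall y, H y = 0.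
Proof.
  destruct ode as [dH [dH1 _]]. intros Hx0 H1x0 y.
  set (E := fun z => H z * H z + H1 z * H1 z).
  set (E' := fun z => 2 * H z * H1 z + 2 * H1 z * (z * H1 z - k * H z)).
  assert (HdE : forall z, D E z (E' z)).
  { intros z. unfold E, E'. eapply derivable_pt_lim_eq; [apply dplus; apply dmul; auto|].
    rewrite hermite_second_deriv. ring. }
  assert (Ey : E y = 0).
  { apply (zero_of_gronwall E E' (1 + Rabs k + 2 * (Rabs x0 + Rabs y)) x0 y HdE).
    - intros z. unfold E. nra.
    - intros z Hz. apply energy_deriv_bound. apply Rabs_le.
      pose proof (Rabs_between x0). pose proof (Rabs_between y).
      pose proof (Rmin_l x0 y). pose proof (Rmin_r x0 y).
      pose proof (Rmax_l x0 y). pose proof (Rmax_r x0 y).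
      destruct (Rle_dec x0 y);
        [rewrite Rmin_left, Rmax_right in Hz|rewrite Rmin_right, Rmax_left in Hz]; lra.
    - unfold E. rewrite Hx0, H1x0. ring. }
  unfold E in Ey. nra.
Qed.

End Hermite_ODE.

Definition sg (k : R) : R := if Rlt_dec 0 k then 1 else -1.

Lemma sg_cases k : sg k = 1 /\ 0 < k \/ sg k = -1 /\ k <= 0.
Proof. unfold sg; destruct Rlt_dec; [left|right]; lra. Qed.

Lemma sg_sq k : sg k * sg k = 1.
Proof. destruct (sg_cases k) as [[-> _]|[-> _]]; ring. Qed.

Lemma sg_mul_pos k : k <> 0 -> 0 < sg k * k.
Proof. destruct (sg_cases k) as [[-> ?]|[-> ?]]; intros; lra. Qed.

Lemma in_dom_of_nonpos k H q : k <= 0 -> in_dom k H q.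
Proof. unfold in_dom. destruct Rlt_dec; [lra|auto]. Qed.

Lemma in_dom_of_pos k H q : 0 < k -> (forall z, H z = 0 -> z < q) -> in_dom k H q.
Proof. unfold in_dom. destruct Rlt_dec; [auto|lra]. Qed.

Lemma in_dom_mono k H q y : in_dom k H q -> q <= y -> in_dom k H y.
Proof.
  unfold in_dom. destruct Rlt_dec; auto. intros Hq Hy z Hz. specialize (Hq z Hz). lra.
Qed.

Section Hermite_sign.

Variables (k : R) (H H1 H2 : R -> R).
Hypotheses (ode : hermite_ode k H H1 H2) (asymp : hermite_asymp k H) (k_neq0 : k <> 0).

Let gauss_hermite y := H1 y * exp (- (y * y) / 2).

Lemma sg_gauss_hermite_decr a b : a < b -> (forall c, a < c < b -> 0 < H c) ->
  sg k * gauss_hermite b < sg k * gauss_hermite a.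
Proof.
  intros Hab Hpos.
  apply (gt_of_deriv_neg (fun y => sg k * gauss_hermite y)
           (fun y => sg k * (- k * H y * exp (- (y * y) / 2)))); auto.
  - intros c _. apply dscal, (deriv_gauss_hermite k H H1 H2 ode).
  - intros c Hc. specialize (Hpos c Hc). pose proof (sg_mul_pos k k_neq0).
    assert (0 < exp (- (c * c) / 2)) by apply exp_pos.
    replace (sg k * (- k * H c * exp (- (c * c) / 2)))
      with (- ((sg k * k) * (H c * exp (- (c * c) / 2)))) by ring.
    assert (0 < H c * exp (- (c * c) / 2)) by nra. nra.
Qed.

Lemma hermite_sg_deriv_pos_of_pos x0 : (forall y, x0 <= y -> 0 < H y) -> 0 < sg k * H1 x0.
Proof.
  destruct ode as [dH _]. intros Hpos.
  destruct (Rlt_le_dec 0 (sg k * H1 x0)) as [|Hle]; auto. exfalso.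
  assert (Hder : forall y, x0 < y -> sg k * H1 y < 0).
  { intros y Hy.
    assert (Hd := sg_gauss_hermite_decr x0 y Hy ltac:(intros c Hc; apply Hpos; lra)).
    unfold gauss_hermite in Hd.
    assert (0 < exp (- (y * y) / 2)) by apply exp_pos.
    assert (0 < exp (- (x0 * x0) / 2)) by apply exp_pos. nra. }
  assert (Hmono : forall y, x0 <= y -> sg k * H y <= sg k * H x0).
  { intros y Hy. apply (ge_of_deriv_nonpos (fun y => sg k * H y) (fun y => sg k * H1 y)); auto.
    - intros c _. apply dscal, dH.
    - intros c Hc. left. apply Hder. lra. }
  assert (Hx0 := Hpos x0 (Rle_refl x0)).
  destruct (sg_cases k) as [[Hs Hk]|[Hs Hk]]; rewrite Hs in Hmono.
  - apply (hermite_asymp_unbounded k H asymp x0 (H x0) Hk).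
    intros y Hy. specialize (Hmono y Hy). lra.
  - apply (hermite_asymp_no_pos_lower_bound k H asymp x0 (H x0) ltac:(lra) Hx0).
    intros y Hy. specialize (Hmono y Hy). lra.
Qed.

Lemma hermite_pos_of_neg : k < 0 -> forall x, 0 < H x.
Proof.
  destruct ode as [dH _]. intros Hk z.
  destruct (Rlt_le_dec 0 (H z)) as [|Hz]; auto. exfalso.
  destruct (hermite_asymp_eventually_pos k H asymp) as [A [HA0 HA]].
  set (b := Rmax z A + 1). pose proof (Rmax_l z A). pose proof (Rmax_r z A).
  destruct (last_zero_before H z b (hermite_continuous k H H1 H2 ode))
    as [x [Hx [Hx0 Hright]]]; [unfold b; lra|exact Hz|apply HA; unfold b; lra|].
  assert (HH1x : 0 <= H1 x).
  { apply (deriv_nonneg_of_right_min H x (H1 x) (b - x)); [lra|apply dH|].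
    intros y Hy. rewrite Hx0. left. apply Hright. lra. }
  assert (HH1b : 0 < - H1 b).
  { replace (- H1 b) with (sg k * H1 b) by (unfold sg; destruct Rlt_dec; lra).
    apply hermite_sg_deriv_pos_of_pos. intros y Hy. apply HA. unfold b in *; lra. }
  assert (Hd := sg_gauss_hermite_decr x b ltac:(lra) ltac:(intros c Hc; apply Hright; lra)).
  unfold gauss_hermite, sg in Hd. destruct Rlt_dec; [lra|].
  assert (0 < exp (- (b * b) / 2)) by apply exp_pos.
  assert (0 < exp (- (x * x) / 2)) by apply exp_pos. nra.
Qed.

Lemma hermite_pos_of_in_dom q : in_dom k H q -> 0 < H q.
Proof.
  unfold in_dom. destruct Rlt_dec as [Hk|Hk]; [|intros _; apply hermite_pos_of_neg; lra].
  intros Hq. destruct (Rlt_le_dec 0 (H q)) as [|Hz]; auto. exfalso.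
  destruct (hermite_asymp_eventually_pos k H asymp) as [A [HA0 HA]].
  set (b := Rmax q A + 1). pose proof (Rmax_l q A). pose proof (Rmax_r q A).
  destruct (last_zero_before H q b (hermite_continuous k H H1 H2 ode))
    as [x [Hx [Hx0 _]]]; [unfold b; lra|exact Hz|apply HA; unfold b; lra|].
  specialize (Hq x Hx0). lra.
Qed.

Lemma hermite_sign_in_dom q : in_dom k H q -> 0 < H q /\ 0 < sg k * H1 q.
Proof.
  intros Hq. split; [now apply hermite_pos_of_in_dom|].
  apply hermite_sg_deriv_pos_of_pos. intros y Hy.
  apply hermite_pos_of_in_dom, (in_dom_mono k H q); auto.
Qed.

End Hermite_sign.

(** * The logarithmic derivative [u = H' / H] *)

Definition logderiv (H H1 : R -> R) (q : R) : R := H1 q / H q.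

Definition riccati (k : R) (H H1 : R -> R) (q : R) : R :=
  q * logderiv H H1 q - k - logderiv H H1 q * logderiv H H1 q.

Definition signed_logderiv (k : R) (H H1 : R -> R) (q : R) : R := sg k * logderiv H H1 q.

Section Logderiv_ODE.

Variables (k : R) (H H1 H2 : R -> R).
Hypothesis ode : hermite_ode k H H1 H2.

Lemma deriv_logderiv q : H q <> 0 -> D (logderiv H H1) q (riccati k H H1 q).
Proof.
  destruct ode as [dH [dH1 _]]. intros Hq. unfold riccati, logderiv.
  eapply derivable_pt_lim_eq; [now apply derivable_pt_lim_div|].
  rewrite (hermite_second_deriv k H H1 H2 ode). unfold Rsqr. simpl. field. exact Hq.
Qed.

(* [exp (-q^2/2) H^2 riccati], written without division; its derivative is
   [exp (-q^2/2) H H'], whose sign is known on the domain. *)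
Definition scaled_riccati (q : R) : R :=
  exp (- (q * q) / 2) * (q * H q * H1 q - k * (H q * H q) - H1 q * H1 q).

Lemma scaled_riccati_eq q : H q <> 0 ->
  scaled_riccati q = exp (- (q * q) / 2) * (H q * H q) * riccati k H H1 q.
Proof. intros. unfold scaled_riccati, riccati, logderiv. field. auto. Qed.

Lemma deriv_scaled_riccati q : D scaled_riccati q (exp (- (q * q) / 2) * H q * H1 q).
Proof.
  destruct ode as [dH [dH1 _]]. unfold scaled_riccati.
  eapply derivable_pt_lim_eq.
  - apply (dmul (fun y => exp (- (y * y) / 2))); [apply dgauss|].
    repeat apply dminus; repeat apply dmul; auto using did, dconst.
  - rewrite (hermite_second_deriv k H H1 H2 ode). ring.
Qed.

End Logderiv_ODE.

Section Logderiv_monotone.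

Variables (k : R) (H H1 H2 : R -> R).
Hypotheses (ode : hermite_ode k H H1 H2) (asymp : hermite_asymp k H) (k_neq0 : k <> 0).

Local Notation u := (logderiv H H1).
Local Notation v := (signed_logderiv k H H1).
Local Notation w := (riccati k H H1).

Lemma in_dom_exists : exists a, in_dom k H a.
Proof.
  destruct (hermite_asymp_eventually_pos k H asymp) as [A [HA0 HA]]. exists (A + 1).
  unfold in_dom. destruct Rlt_dec; auto. intros z Hz.
  destruct (Rlt_le_dec z (A + 1)); auto. specialize (HA z ltac:(lra)). lra.
Qed.

Lemma signed_logderiv_pos q : in_dom k H q -> 0 < v q.
Proof.
  intros Hq. destruct (hermite_sign_in_dom k H H1 H2 ode asymp k_neq0 q Hq).
  unfold signed_logderiv, logderiv.
  replace (sg k * (H1 q / H q)) with (sg k * H1 q / H q) by (field; lra).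
  now apply Rdiv_lt_0_compat.
Qed.

Lemma deriv_logderiv_in_dom q : in_dom k H q -> D u q (w q).
Proof.
  intros Hq. apply (deriv_logderiv k H H1 H2 ode).
  destruct (hermite_sign_in_dom k H H1 H2 ode asymp k_neq0 q Hq). lra.
Qed.

Lemma deriv_signed_logderiv q : in_dom k H q -> D v q (sg k * w q).
Proof. intros Hq. apply dscal, deriv_logderiv_in_dom, Hq. Qed.

Lemma signed_logderiv_no_lower_bound a c : in_dom k H a -> 0 < c ->
  ~ (forall y, a <= y -> c <= v y).
Proof.
  destruct ode as [dH _]. intros Ha Hc Hb.
  assert (HP : forall y, a <= y -> 0 < H y) by
    (intros y Hy; apply (hermite_pos_of_in_dom k H H1 H2 ode asymp k_neq0),
       (in_dom_mono k H a); auto).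
  assert (Hpa := HP a (Rle_refl a)).
  unfold signed_logderiv, logderiv, sg in Hb. destruct (Rlt_dec 0 k).
  - apply (hermite_asymp_not_exp_growth k H asymp a c (H a * exp (- c * a)) Hc).
    + assert (0 < exp (- c * a)) by apply exp_pos. nra.
    + apply (exp_lower_bound_of_deriv H H1); auto.
      intros x Hx. specialize (Hb x Hx). specialize (HP x Hx).
      replace (H1 x) with (H1 x / H x * H x) by (field; lra). nra.
  - apply (hermite_asymp_not_exp_decay k H asymp a c (H a * exp (c * a)) Hc).
    apply (exp_upper_bound_of_deriv H H1); auto.
    intros x Hx. specialize (Hb x Hx). specialize (HP x Hx).
    replace (H1 x) with (H1 x / H x * H x) by (field; lra). nra.
Qed.

(* [sg k * w q >= 0] at one point would make [sg k * scaled_riccati] increase, hence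
   [v] increase from there on, contradicting [signed_logderiv_no_lower_bound]. *)
Lemma sg_riccati_neg q : in_dom k H q -> sg k * w q < 0.
Proof.
  intros Hq. destruct (Rlt_le_dec (sg k * w q) 0) as [|Hge]; auto. exfalso.
  assert (Hdom : forall y, q <= y -> in_dom k H y) by (intros; eapply in_dom_mono; eauto).
  assert (Hsign : forall y, q <= y -> 0 < H y /\ 0 < sg k * H1 y) by
    (intros; apply (hermite_sign_in_dom k H H1 H2 ode asymp k_neq0); auto).
  assert (Hw : forall y, q < y -> 0 < sg k * w y).
  { intros y Hy.
    assert (Hchi : sg k * scaled_riccati k H H1 q < sg k * scaled_riccati k H H1 y).
    { apply (lt_of_deriv_pos (fun y => sg k * scaled_riccati k H H1 y)
              (fun y => sg k * (exp (- (y * y) / 2) * H y * H1 y))); auto.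
      - intros c _. apply dscal, (deriv_scaled_riccati k H H1 H2 ode).
      - intros c Hc. destruct (Hsign c ltac:(lra)).
        assert (0 < exp (- (c * c) / 2)) by apply exp_pos.
        replace (sg k * (exp (- (c * c) / 2) * H c * H1 c))
          with (exp (- (c * c) / 2) * H c * (sg k * H1 c)) by ring.
        apply Rmult_lt_0_compat; [apply Rmult_lt_0_compat|]; auto. }
    destruct (Hsign q ltac:(lra)) as [Hq0 _]. destruct (Hsign y ltac:(lra)) as [Hy0 _].
    rewrite !scaled_riccati_eq in Hchi by lra.
    assert (0 < exp (- (q * q) / 2)) by apply exp_pos.
    assert (0 < exp (- (y * y) / 2)) by apply exp_pos.
    assert (0 < exp (- (y * y) / 2) * (H y * H y)) by (apply Rmult_lt_0_compat; nra).
    assert (0 <= exp (- (q * q) / 2) * (H q * H q) * (sg k * w q))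
      by (apply Rmult_le_pos; [apply Rmult_le_pos|]; nra).
    nra. }
  apply (signed_logderiv_no_lower_bound (q + 1) (v (q + 1)));
    [apply Hdom; lra|apply signed_logderiv_pos, Hdom; lra|].
  intros y Hy. apply (le_of_deriv_nonneg v (fun y => sg k * w y)); auto.
  - intros c Hc. apply deriv_signed_logderiv, Hdom. lra.
  - intros c Hc. left. apply Hw. lra.
Qed.

Lemma signed_logderiv_strict_decr q1 q2 : in_dom k H q1 -> q1 < q2 -> v q2 < v q1.
Proof.
  intros Hq1 Hq. apply (gt_of_deriv_neg v (fun y => sg k * w y)); auto.
  - intros c Hc. apply deriv_signed_logderiv. eapply in_dom_mono; eauto; lra.
  - intros c Hc. apply sg_riccati_neg. eapply in_dom_mono; eauto; lra.
Qed.

Lemma signed_logderiv_small t : 0 < t -> exists q, in_dom k H q /\ v q < t.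
Proof.
  intros Ht. destruct in_dom_exists as [a Ha].
  apply NNPP. intros Hn.
  apply (signed_logderiv_no_lower_bound a t Ha Ht).
  intros y Hy. destruct (Rle_lt_dec t (v y)); auto.
  exfalso. apply Hn. exists y. split; auto. eapply in_dom_mono; eauto.
Qed.

(* Right of the last zero of [H] (for [k > 0]), [u] cannot stay bounded: a bound
   [H' <= t H] would force [H b exp (-t b) <= H x exp (-t x) = 0]. *)
Lemma logderiv_large_near_zero z t : 0 < k -> H z = 0 -> 0 < t ->
  exists q, in_dom k H q /\ t < u q.
Proof.
  destruct ode as [dH _]. intros Hk Hz Ht. apply NNPP. intros Hn.
  destruct (hermite_asymp_eventually_pos k H asymp) as [A [HA0 HA]].
  set (b := Rmax z A + 1). pose proof (Rmax_l z A). pose proof (Rmax_r z A).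
  assert (Hb : 0 < H b) by (apply HA; unfold b; lra).
  destruct (last_zero_before H z b (hermite_continuous k H H1 H2 ode))
    as [x [Hx [Hx0 Hright]]]; [unfold b; lra|lra|exact Hb|].
  assert (Hdom : forall y, x < y <= b -> in_dom k H y).
  { intros y Hy. apply in_dom_of_pos; [exact Hk|]. intros z' Hz'.
    destruct (Rlt_le_dec z' y) as [|Hzy]; auto. exfalso.
    destruct (Rle_lt_dec z' b).
    - specialize (Hright z' ltac:(lra)). lra.
    - specialize (HA z' ltac:(unfold b in *; lra)). lra. }
  assert (Hdecr : H b * exp (- t * b) <= H x * exp (- t * x)).
  { apply (ge_of_deriv_nonpos (fun y => H y * exp (- t * y))
      (fun y => H1 y * exp (- t * y) + H y * (exp (- t * y) * - t))); [lra| |].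
    - intros c _. apply (dmul H (fun y => exp (- t * y))); [apply dH|apply dexp_lin].
    - intros c Hc. specialize (Hright c ltac:(lra)).
      assert (Huc : u c <= t).
      { destruct (Rle_lt_dec (u c) t); auto. exfalso. apply Hn.
        exists c. split; auto. apply Hdom. lra. }
      unfold logderiv in Huc.
      assert (H1 c <= t * H c)
        by (replace (H1 c) with (H1 c / H c * H c) by (field; lra); nra).
      assert (0 < exp (- t * c)) by apply exp_pos. nra. }
  rewrite Hx0 in Hdecr. assert (0 < exp (- t * b)) by apply exp_pos. nra.
Qed.

Lemma logderiv_large_of_no_zero t : 0 < k -> (forall z, H z <> 0) -> 0 < t ->
  exists q, in_dom k H q /\ t < u q.
Proof.
  intros Hk Hnz Ht.
  assert (Hall : forall q, in_dom k H q).
  { intros q. apply in_dom_of_pos; [exact Hk|]. intros z Hz. now apply Hnz in Hz. }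
  assert (Hu : forall q, 0 < u q).
  { intros q. pose proof (signed_logderiv_pos q (Hall q)) as Hp.
    unfold signed_logderiv, sg in Hp. destruct Rlt_dec; lra. }
  set (q := - (t + 1) / k).
  assert (Hkq : k * q = - (t + 1)) by (unfold q; field; lra).
  assert (Hq : q < 0) by (apply Rmult_lt_reg_l with k; lra).
  (* [u + k id] decreases on [q, 0], its derivative being [q u - u^2 < 0]. *)
  assert (u 0 + k * 0 <= u q + k * q).
  { apply (ge_of_deriv_nonpos (fun y => u y + k * y) (fun y => w y + k)); [lra| |].
    - intros c _. apply dplus; [apply deriv_logderiv_in_dom, Hall|].
      eapply derivable_pt_lim_eq; [apply dscal, did|ring].
    - intros c Hc. unfold riccati. specialize (Hu c). nra. }
  exists q. split; [apply Hall|]. specialize (Hu 0). lra.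
Qed.

Lemma neg_logderiv_large t : k < 0 -> 0 < t -> exists q, t < - u q.
Proof.
  intros Hk Ht.
  assert (Hall : forall q, in_dom k H q) by (intros; apply in_dom_of_nonpos; lra).
  assert (Hs : sg k = -1) by (unfold sg; destruct Rlt_dec; lra).
  assert (Hu : forall q, u q < 0).
  { intros q. pose proof (signed_logderiv_pos q (Hall q)) as Hp.
    unfold signed_logderiv in Hp. rewrite Hs in Hp. lra. }
  assert (Hw : forall q, 0 < w q).
  { intros q. pose proof (sg_riccati_neg q (Hall q)) as Hp. rewrite Hs in Hp. lra. }
  apply NNPP. intros Hn.
  assert (Hb : forall q, - u q <= t).
  { intros q. destruct (Rle_lt_dec (- u q) t); auto. exfalso. apply Hn. now exists q. }
  set (c0 := - u 0). assert (Hc0 : 0 < c0) by (unfold c0; specialize (Hu 0); lra).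
  assert (Hle : forall q, q <= 0 -> u q <= u 0).
  { intros q Hq. apply (le_of_deriv_nonneg u w); auto.
    - intros c _. apply deriv_logderiv_in_dom, Hall.
    - intros c _. left. apply Hw. }
  set (L := (1 + t * t) / c0).
  assert (HQc : L * c0 = 1 + t * t) by (unfold L; field; lra).
  assert (HQ : 0 < L) by (apply Rmult_lt_reg_r with c0; nra).
  (* Far to the left, [w = q u - k - u^2 >= L c0 - t^2 >= 1], so [u] grows at least like [q]. *)
  assert (Hw1 : forall y, y <= - L -> 1 <= w y).
  { intros y Hy. unfold riccati.
    specialize (Hb y). specialize (Hle y ltac:(lra)). specialize (Hu y).
    assert (y * u y >= L * c0) by (unfold c0 in *; nra).
    assert (u y * u y <= t * t) by nra. nra. }
  set (q := - L - t - 1).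
  assert (u q - q <= u (- L) - - L).
  { apply (le_of_deriv_nonneg (fun y => u y - y) (fun y => w y - 1)); [unfold q; lra| |].
    - intros c _. apply dminus; [apply deriv_logderiv_in_dom, Hall|apply did].
    - intros c Hc. specialize (Hw1 c ltac:(unfold q in *; lra)). lra. }
  specialize (Hb q). specialize (Hu (- L)). unfold q in *. lra.
Qed.

Lemma signed_logderiv_large t : 0 < t -> exists q, in_dom k H q /\ t < v q.
Proof.
  intros Ht. unfold signed_logderiv.
  destruct (sg_cases k) as [[Hs Hk]|[Hs Hk]]; rewrite Hs.
  - assert (Hq : exists q, in_dom k H q /\ t < u q).
    { destruct (classic (exists z, H z = 0)) as [[z Hz]|Hnz].
      - exact (logderiv_large_near_zero z t Hk Hz Ht).
      - apply logderiv_large_of_no_zero; auto. intros z Hz. apply Hnz. now exists z. }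
    destruct Hq as [q [Hq Hqt]]. exists q. split; [exact Hq|lra].
  - destruct (neg_logderiv_large t ltac:(lra) Ht) as [q Hq].
    exists q. split; [apply in_dom_of_nonpos; lra|lra].
Qed.

End Logderiv_monotone.

Section Logderiv_inverse.

Variables (k : R) (H H1 H2 : R -> R).
Hypotheses (ode : hermite_ode k H H1 H2) (asymp : hermite_asymp k H) (k_neq0 : k <> 0).

Local Notation v := (signed_logderiv k H H1).
Local Notation w := (riccati k H H1).

Lemma signed_logderiv_surj t : 0 < t -> exists q, in_dom k H q /\ v q = t.
Proof.
  intros Ht.
  destruct (signed_logderiv_large k H H1 H2 ode asymp k_neq0 t Ht) as [q1 [Hq1 Hq1t]].
  destruct (signed_logderiv_small k H H1 H2 ode asymp k_neq0 t Ht) as [q2 [Hq2 Hq2t]].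
  assert (Hlt : q1 < q2).
  { destruct (Rtotal_order q1 q2) as [|[->|Hgt]]; [auto|lra|].
    pose proof (signed_logderiv_strict_decr k H H1 H2 ode asymp k_neq0 q2 q1 Hq2 Hgt). lra. }
  destruct (f_interv_is_interv (fun y => - v y) q1 q2 (- t) Hlt) as [q [Hq Hqe]];
    [lra| |exists q; split; [apply (in_dom_mono k H q1); auto; lra|lra]].
  intros x Hx. apply derivable_continuous_pt. exists (- (sg k * w x)).
  apply derivable_pt_lim_opp with (f := v).
  apply (deriv_signed_logderiv k H H1 H2 ode asymp k_neq0).
  apply (in_dom_mono k H q1); auto; lra.
Qed.

Lemma signed_logderiv_inj q1 q2 : in_dom k H q1 -> in_dom k H q2 -> v q1 = v q2 -> q1 = q2.
Proof.
  intros Hq1 Hq2 E. destruct (Rtotal_order q1 q2) as [Hl|[Hl|Hl]]; auto; exfalso.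
  - pose proof (signed_logderiv_strict_decr k H H1 H2 ode asymp k_neq0 q1 q2 Hq1 Hl). lra.
  - pose proof (signed_logderiv_strict_decr k H H1 H2 ode asymp k_neq0 q2 q1 Hq2 Hl). lra.
Qed.

Lemma Rabs_logderiv q : in_dom k H q -> Rabs (H1 q / H q) = v q.
Proof.
  intros Hq. pose proof (signed_logderiv_pos k H H1 H2 ode asymp k_neq0 q Hq).
  unfold signed_logderiv, logderiv, sg in *. destruct Rlt_dec.
  - rewrite Rabs_right; lra.
  - rewrite Rabs_left; lra.
Qed.

Lemma logderiv_tendsto_0 e : 0 < e ->
  exists X, forall x, X <= x -> in_dom k H x /\ Rabs (logderiv H H1 x) < e.
Proof.
  intros He.
  destruct (signed_logderiv_small k H H1 H2 ode asymp k_neq0 e He) as [q [Hq Hqe]].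
  exists q. intros x Hx. assert (Hdx : in_dom k H x) by (eapply in_dom_mono; eauto).
  split; auto. unfold logderiv. rewrite Rabs_logderiv by exact Hdx.
  destruct Hx as [Hx|<-]; [|exact Hqe].
  pose proof (signed_logderiv_strict_decr k H H1 H2 ode asymp k_neq0 q x Hq Hx). lra.
Qed.

End Logderiv_inverse.

(** * [H_{k+1} (q) = q H_k (q) - H_k' (q)] *)

Lemma hermite_ode_sub k f f1 f2 g g1 g2 :
  hermite_ode k f f1 f2 -> hermite_ode k g g1 g2 ->
  hermite_ode k (fun x => f x - g x) (fun x => f1 x - g1 x) (fun x => f2 x - g2 x).
Proof.
  intros [df [df1 Hf]] [dg [dg1 Hg]].
  split; [|split]; intros x; [apply dminus; auto|apply dminus; auto|].
  specialize (Hf x). specialize (Hg x). lra.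
Qed.

Lemma hermite_ode_shift k H H1 H2 : hermite_ode k H H1 H2 ->
  hermite_ode (k + 1) (fun x => x * H x - H1 x) (fun x => (k + 1) * H x)
    (fun x => (k + 1) * H1 x).
Proof.
  intros ode. pose proof ode as [dH [dH1 _]].
  split; [|split]; intros x; [| apply dscal, dH|ring].
  eapply derivable_pt_lim_eq; [apply dminus; [apply dmul; [apply did|apply dH]|apply dH1]|].
  rewrite (hermite_second_deriv k H H1 H2 ode). ring.
Qed.

Lemma hermite_wronskian k f f1 f2 g g1 g2 :
  hermite_ode k f f1 f2 -> hermite_ode k g g1 g2 ->
  exists C, forall x, g x * f1 x - g1 x * f x = C * exp (x * x / 2).
Proof.
  intros odef odeg. pose proof odef as [df [df1 _]]. pose proof odeg as [dg [dg1 _]].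
  set (W := fun x => g x * f1 x - g1 x * f x).
  set (V := fun x => W x * exp (- (x * x) / 2)).
  assert (HV : forall x, D V x 0).
  { intros x. unfold V, W. eapply derivable_pt_lim_eq.
    - apply (dmul (fun x => g x * f1 x - g1 x * f x) (fun x => exp (- (x * x) / 2))).
      + apply dminus; apply dmul; auto.
      + apply dgauss.
    - rewrite (hermite_second_deriv k f f1 f2 odef), (hermite_second_deriv k g g1 g2 odeg).
      ring. }
  exists (V 0). intros x.
  assert (HVx : V x = V 0).
  { destruct (Rle_lt_dec 0 x).
    - symmetry. apply eq_of_deriv_zero; auto.
    - apply eq_of_deriv_zero; auto; lra. }
  rewrite <- HVx. unfold V. fold (W x).
  rewrite Rmult_assoc, <- exp_plus. replace (- (x * x) / 2 + x * x / 2) with 0 by field.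
  rewrite exp_0. ring.
Qed.

Lemma hermite_asymp_shift k H H1 H2 : hermite_ode k H H1 H2 -> hermite_asymp k H ->
  k <> 0 -> hermite_asymp (k + 1) (fun x => x * H x - H1 x).
Proof.
  intros ode asymp Hk e He.
  set (d := Rmin (1/2) (e / 4)).
  assert (Hd : 0 < d) by (apply Rmin_pos; lra).
  assert (Hd1 : d <= 1/2) by apply Rmin_l. assert (Hde : d <= e / 4) by apply Rmin_r.
  destruct (asymp d Hd) as [A HA].
  destruct (logderiv_tendsto_0 k H H1 H2 ode asymp Hk d Hd) as [X HX].
  exists (Rmax (Rmax A X) 1). intros x Hx Hx0.
  pose proof (Rmax_l (Rmax A X) 1). pose proof (Rmax_r (Rmax A X) 1).
  pose proof (Rmax_l A X). pose proof (Rmax_r A X).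
  specialize (HA x ltac:(lra) Hx0). destruct (HX x ltac:(lra)) as [Hdom Hu].
  destruct (hermite_sign_in_dom k H H1 H2 ode asymp Hk x Hdom) as [HHx _].
  assert (HP := Rpower_pos x k).
  replace (Rpower x (k + 1)) with (x * Rpower x k)
    by (rewrite (Rpower_pred x (k + 1)) by lra; do 2 f_equal; ring).
  set (b := H x / Rpower x k) in *.
  replace ((x * H x - H1 x) / (x * Rpower x k) - 1) with
    ((b - 1) - logderiv H H1 x / x * b) by (unfold b, logderiv; field; lra).
  apply Rabs_def2 in HA. apply Rabs_def2 in Hu.
  assert (Hux : Rabs (logderiv H H1 x / x) < d).
  { unfold Rdiv. rewrite Rabs_mult, Rabs_inv, (Rabs_right x) by lra.
    apply Rlt_le_trans with (d * / x).
    - apply Rmult_lt_compat_r; [apply Rinv_0_lt_compat; lra|apply Rabs_def1; lra].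
    - assert (/ x <= 1) by (rewrite <- Rinv_1; apply Rinv_le_contravar; lra). nra. }
  apply Rabs_def2 in Hux.
  assert (0 < (d - logderiv H H1 x / x) * b) by (apply Rmult_lt_0_compat; lra).
  assert (0 < (d + logderiv H H1 x / x) * b) by (apply Rmult_lt_0_compat; lra).
  assert (d * b < 3/2 * d) by nra.
  apply Rabs_def1; lra.
Qed.

(* [(f/g)' = C exp (x^2/2) / g^2] is eventually at least [1] in absolute value when
   [g ~ x^k] and [C <> 0], which is incompatible with [|f/g| < 1]. *)
Lemma ratio_deriv_gauss_eq0 k g r C X : hermite_asymp k g ->
  (forall x, X < x -> 0 < g x /\ Rabs (r x) < 1) ->
  (forall x, X < x -> D r x (C * exp (x * x / 2) / g x ^ 2)) -> C = 0.
Proof.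
  intros Hg Hr dr. apply NNPP. intros HC0.
  destruct (hermite_asymp_sq_le_gauss k g Hg (Rabs C) ltac:(now apply Rabs_pos_lt))
    as [x2 Hx2].
  set (x0 := Rmax X x2 + 1). pose proof (Rmax_l X x2). pose proof (Rmax_r X x2).
  assert (Hbig : forall x, x0 <= x -> 1 <= Rabs (C * exp (x * x / 2) / g x ^ 2)).
  { intros x Hx. destruct (Hx2 x ltac:(unfold x0 in *; lra)) as [Hgx Hsq].
    assert (0 < g x ^ 2) by (simpl; nra).
    unfold Rdiv. rewrite !Rabs_mult, (Rabs_right (exp _)), (Rabs_right (/ _))
      by (left; try apply exp_pos; now apply Rinv_0_lt_compat).
    apply Rmult_le_reg_r with (g x ^ 2); [lra|].
    rewrite Rmult_assoc, Rinv_l by lra. lra. }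
  destruct (MVT_cor2 r (fun x => C * exp (x * x / 2) / g x ^ 2) x0 (x0 + 3))
    as [c [Hc1 Hc2]]; [lra|intros c Hc; apply dr; unfold x0 in *; lra|].
  destruct (Hr x0 ltac:(unfold x0; lra)) as [_ Ha0].
  destruct (Hr (x0 + 3) ltac:(unfold x0; lra)) as [_ Ha3].
  specialize (Hbig c ltac:(lra)).
  apply Rabs_def2 in Ha0. apply Rabs_def2 in Ha3.
  replace (x0 + 3 - x0) with 3 in Hc1 by ring.
  assert (Habs : Rabs (r (x0 + 3) - r x0) = Rabs (C * exp (c * c / 2) / g c ^ 2) * 3)
    by (rewrite Hc1, Rabs_mult, (Rabs_right 3) by lra; reflexivity).
  assert (Rabs (r (x0 + 3) - r x0) < 2) by (apply Rabs_def1; lra).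
  lra.
Qed.

(* The Wronskian of [f] and [g] is [C exp (x^2/2)]; [C = 0] by the previous lemma, so
   [f/g] is eventually constant, hence [0], and [f] has vanishing Cauchy data. *)
Lemma hermite_zero_of_negligible k f f1 f2 g g1 g2 :
  hermite_ode k f f1 f2 -> hermite_ode k g g1 g2 -> hermite_asymp k g ->
  (forall e, 0 < e -> exists X, forall x, X < x -> 0 < g x /\ Rabs (f x / g x) < e) ->
  forall x, f x = 0.
Proof.
  intros odef odeg Hg Hsmall. pose proof odef as [df _]. pose proof odeg as [dg _].
  destruct (hermite_wronskian k f f1 f2 g g1 g2 odef odeg) as [C HW].
  set (r := fun x => f x / g x).
  assert (Hr : forall x, g x <> 0 -> D r x (C * exp (x * x / 2) / g x ^ 2)).
  { intros x Hx. unfold r. eapply derivable_pt_lim_eq; [now apply derivable_pt_lim_div|].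
    rewrite <- HW. unfold Rsqr. simpl. field. exact Hx. }
  destruct (Hsmall 1 ltac:(lra)) as [X1 HX1].
  assert (HC0 : C = 0).
  { apply (ratio_deriv_gauss_eq0 k g r C X1 Hg HX1).
    intros x Hx. apply Hr. destruct (HX1 x Hx). lra. }
  set (x1 := X1 + 1).
  assert (Hrc : forall x, x1 <= x -> r x = r x1).
  { intros x Hx. symmetry. apply eq_of_deriv_zero; auto. intros c Hc.
    destruct (HX1 c ltac:(unfold x1 in *; lra)) as [Hgc _].
    eapply derivable_pt_lim_eq; [apply Hr; lra|]. rewrite HC0. field. lra. }
  assert (Hr0 : r x1 = 0).
  { apply NNPP. intros Hne.
    destruct (Hsmall (Rabs (r x1)) ltac:(apply Rabs_pos_lt; auto)) as [X2 HX2].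
    set (y := Rmax X2 x1 + 1). pose proof (Rmax_l X2 x1). pose proof (Rmax_r X2 x1).
    destruct (HX2 y ltac:(unfold y; lra)) as [_ Hy]. fold (r y) in Hy.
    rewrite (Hrc y) in Hy by (unfold y; lra). lra. }
  destruct (HX1 x1 ltac:(unfold x1; lra)) as [Hg1 _].
  assert (Hf0 : f x1 = 0).
  { unfold r in Hr0. replace (f x1) with (f x1 / g x1 * g x1) by (field; lra).
    rewrite Hr0. ring. }
  assert (Hf10 : f1 x1 = 0).
  { specialize (HW x1). rewrite HC0, Hf0 in HW. apply (Rmult_eq_reg_l (g x1)); lra. }
  exact (hermite_ode_zero_data k f f1 f2 odef x1 Hf0 Hf10).
Qed.

Lemma hermite_succ_eq k H H1 H2 G G1 G2 : hermite_ode k H H1 H2 -> hermite_asymp k H ->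
  k <> 0 -> hermite_ode (k + 1) G G1 G2 -> hermite_asymp (k + 1) G ->
  forall x, G x = x * H x - H1 x.
Proof.
  intros ode asymp Hk odeG asympG x.
  enough (G x - (x * H x - H1 x) = 0) by lra.
  apply (hermite_zero_of_negligible (k + 1) _ _ _ G G1 G2
    (hermite_ode_sub _ _ _ _ _ _ _ odeG (hermite_ode_shift k H H1 H2 ode)) odeG asympG).
  apply (hermite_asymp_ratio_sub (k + 1)); auto.
  exact (hermite_asymp_shift k H H1 H2 ode asymp Hk).
Qed.

(** * The function [F_k] and its first two derivatives *)

Definition signed_logderiv_inv (k : R) (H H1 : R -> R) (t : R) : R :=
  epsilon (inhabits 0) (fun q => in_dom k H q /\ signed_logderiv k H H1 q = t).

Section Fk_derivatives.

Variables (k : R) (H H1 H2 G : R -> R).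
Hypotheses (ode : hermite_ode k H H1 H2) (asymp : hermite_asymp k H) (k_neq0 : k <> 0).
Hypothesis G_eq : forall x, G x = x * H x - H1 x.

Local Notation u := (logderiv H H1).
Local Notation v := (signed_logderiv k H H1).
Local Notation w := (riccati k H H1).
Local Notation Q := (signed_logderiv_inv k H H1).

Lemma signed_logderiv_inv_spec t : 0 < t -> in_dom k H (Q t) /\ v (Q t) = t.
Proof.
  intros Ht. unfold signed_logderiv_inv. apply epsilon_spec.
  exact (signed_logderiv_surj k H H1 H2 ode asymp k_neq0 t Ht).
Qed.

Lemma sg_riccati_inv_neg t : 0 < t -> sg k * w (Q t) < 0.
Proof.
  intros Ht. apply (sg_riccati_neg k H H1 H2 ode asymp k_neq0).
  apply signed_logderiv_inv_spec, Ht.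
Qed.

Lemma riccati_inv_neq0 t : 0 < t -> w (Q t) <> 0.
Proof. intros Ht Hc. pose proof (sg_riccati_inv_neg t Ht) as Hw. rewrite Hc in Hw. lra. Qed.

Lemma hermite_inv_pos t : 0 < t -> 0 < H (Q t).
Proof.
  intros Ht. apply (hermite_pos_of_in_dom k H H1 H2 ode asymp k_neq0).
  apply signed_logderiv_inv_spec, Ht.
Qed.

Lemma deriv_signed_logderiv_inv t : 0 < t -> D Q t (1 / (sg k * w (Q t))).
Proof.
  intros Ht.
  assert (Hw := sg_riccati_inv_neg t Ht).
  (* Apply the inverse function theorem to the increasing function [- v]. *)
  set (g := fun s => Q (- s)).
  assert (Hg : D g (- t) (1 / - (sg k * w (g (- t))))).
  { apply (derivable_pt_lim_inverse (fun q => - v q) g (fun q => - (sg k * w q))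
             (in_dom k H) (- (2 * t)) (- (t / 2))); [lra| | | | |].
    - intros s Hs. unfold g. destruct (signed_logderiv_inv_spec (- s)) as [Hd Hv]; [lra|].
      split; [exact Hd|lra].
    - intros q Hq. apply derivable_pt_lim_opp with (f := v).
      now apply (deriv_signed_logderiv k H H1 H2 ode asymp k_neq0).
    - intros q1 q2 Hq1 Hq.
      pose proof (signed_logderiv_strict_decr k H H1 H2 ode asymp k_neq0 q1 q2 Hq1 Hq). lra.
    - intros q1 q Hq1 Hq. eapply in_dom_mono; eauto.
    - unfold g. rewrite Ropp_involutive. lra. }
  unfold g in Hg. rewrite Ropp_involutive in Hg.
  apply (derivable_pt_lim_ext (fun s => g (- s)));
    [intros s; unfold g; now rewrite Ropp_involutive|].
  eapply derivable_pt_lim_eq; [apply (dcomp g (fun s => - s)); [|exact Hg]|].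
  - apply derivable_pt_lim_opp with (f := fun s => s), did.
  - field. split; intro Hc; rewrite Hc in Hw; lra.
Qed.

Lemma deriv_Rpower_hermite q : 0 < H q ->
  D (fun q => Rpower (H q) (/ k)) q (/ k * Rpower (H q) (/ k) * u q).
Proof.
  destruct ode as [dH _]. intros Hq.
  eapply derivable_pt_lim_eq; [apply (dcomp (fun s => Rpower s (/ k)) H); [apply dH|]|].
  - now apply drpow.
  - unfold logderiv, Rdiv. ring.
Qed.

Lemma Fk_eq t : 0 < t -> Fk k H H1 G t = (Q t - u (Q t)) / Rpower (H (Q t)) (/ k).
Proof.
  intros Ht. unfold Fk. destruct (Req_EM_T t 0) as [|_]; [lra|].
  destruct (signed_logderiv_inv_spec t Ht) as [HQd HQv].
  set (P := fun r => exists q, in_dom k H q /\ t = Rabs (H1 q / H q) /\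
                 r = G q / Rpower (H q) (1 + / k)).
  destruct (epsilon_spec (inhabits 0) P) as [q [Hq [Htq ->]]].
  { exists (G (Q t) / Rpower (H (Q t)) (1 + / k)), (Q t).
    rewrite (Rabs_logderiv k H H1 H2 ode asymp k_neq0) by exact HQd. auto. }
  rewrite (Rabs_logderiv k H H1 H2 ode asymp k_neq0) in Htq by exact Hq.
  assert (Hqe : q = Q t)
    by (apply (signed_logderiv_inj k H H1 H2 ode asymp k_neq0); auto; lra).
  rewrite <- Hqe. assert (Hh := hermite_pos_of_in_dom k H H1 H2 ode asymp k_neq0 q Hq).
  unfold logderiv. rewrite G_eq, Rpower_plus, Rpower_1 by exact Hh.
  assert (0 < Rpower (H q) (/ k)) by apply Rpower_pos.
  field. lra.
Qed.

Definition Fk_deriv (t : R) : R := - sg k * (1 + / k) / Rpower (H (Q t)) (/ k).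

Definition Fk_deriv2 (t : R) : R :=
  (1 + / k) / k * u (Q t) / (Rpower (H (Q t)) (/ k) * w (Q t)).

Lemma deriv_Fk t : 0 < t -> D (Fk k H H1 G) t (Fk_deriv t).
Proof.
  intros Ht.
  apply (derivable_pt_lim_locally_ext
           (fun s => (Q s - u (Q s)) / Rpower (H (Q s)) (/ k)) _ t (t / 2) (2 * t));
    [lra|intros s Hs; symmetry; apply Fk_eq; lra|].
  assert (Hh := hermite_inv_pos t Ht). assert (Hw := sg_riccati_inv_neg t Ht).
  assert (0 < Rpower (H (Q t)) (/ k)) by apply Rpower_pos.
  destruct (signed_logderiv_inv_spec t Ht) as [HQd _].
  eapply derivable_pt_lim_eq.
  - apply (dcomp (fun q => (q - u q) / Rpower (H q) (/ k)) Q);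
      [apply deriv_signed_logderiv_inv, Ht|].
    apply derivable_pt_lim_div; [|apply deriv_Rpower_hermite; exact Hh|lra].
    apply dminus; [apply did|].
    exact (deriv_logderiv_in_dom k H H1 H2 ode asymp k_neq0 _ HQd).
  - assert (Hw0 := riccati_inv_neq0 t Ht).
    unfold Fk_deriv, Rsqr. unfold riccati in *. simpl.
    destruct (sg_cases k) as [[Hs _]|[Hs _]]; rewrite Hs; field;
      repeat split; auto using Rpower_neq0.
Qed.

Lemma deriv_Fk_deriv t : 0 < t -> D Fk_deriv t (Fk_deriv2 t).
Proof.
  intros Ht.
  assert (Hh := hermite_inv_pos t Ht). assert (Hw := sg_riccati_inv_neg t Ht).
  assert (0 < Rpower (H (Q t)) (/ k)) by apply Rpower_pos.
  apply (derivable_pt_lim_ext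
    (fun s => (- sg k * (1 + / k)) * / Rpower (H (Q s)) (/ k)));
    [intros s; unfold Fk_deriv, Rdiv; ring|].
  eapply derivable_pt_lim_eq.
  - apply dscal, dinv; [lra|].
    apply (dcomp (fun q => Rpower (H q) (/ k)) Q);
      [apply deriv_signed_logderiv_inv, Ht|apply deriv_Rpower_hermite; exact Hh].
  - unfold Fk_deriv2.
    destruct (sg_cases k) as [[Hs _]|[Hs _]]; rewrite Hs in *; field; repeat split; lra.
Qed.

Lemma Fk_ode t : 0 < t ->
  Fk_deriv2 t * ((1 + / k) * / k * Fk k H H1 G t + Fk_deriv t / t) =
  (/ k) ^ 2 * Fk_deriv t ^ 2.
Proof.
  intros Ht. destruct (signed_logderiv_inv_spec t Ht) as [_ Hv].
  assert (Hw0 := riccati_inv_neq0 t Ht).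
  assert (Hu0 : u (Q t) <> 0).
  { intros Hc. unfold signed_logderiv in Hv. rewrite Hc in Hv. lra. }
  rewrite Fk_eq by exact Ht. unfold Fk_deriv2, Fk_deriv.
  set (q := Q t) in *. rewrite <- Hv. unfold signed_logderiv. unfold riccati in *.
  destruct (sg_cases k) as [[Hs _]|[Hs _]]; rewrite Hs; field;
    repeat split; auto using Rpower_neq0.
Qed.

Lemma Fk_deriv2_sign t : k <> -1 -> 0 < t -> (k + 1) * Fk_deriv2 t < 0.
Proof.
  intros Hk1 Ht. destruct (signed_logderiv_inv_spec t Ht) as [HQd Hv].
  assert (Hw := sg_riccati_inv_neg t Ht). assert (HR := Rpower_pos (H (Q t)) (/ k)).
  assert (Huw : u (Q t) * w (Q t) < 0).
  { pose proof (signed_logderiv_pos k H H1 H2 ode asymp k_neq0 _ HQd) as Hp.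
    unfold signed_logderiv in Hp.
    replace (u (Q t) * w (Q t)) with ((sg k * u (Q t)) * (sg k * w (Q t)))
      by (rewrite <- (Rmult_1_l (u (Q t) * w (Q t))), <- (sg_sq k); ring).
    nra. }
  assert (Hw0 := riccati_inv_neq0 t Ht).
  replace ((k + 1) * Fk_deriv2 t)
    with ((k + 1) * (k + 1) * (u (Q t) * w (Q t)) /
          (k * k * Rpower (H (Q t)) (/ k) * (w (Q t) * w (Q t))))
    by (unfold Fk_deriv2; field; repeat split; auto using Rpower_neq0).
  assert (0 < (k + 1) * (k + 1)) by (assert (k + 1 <> 0) by lra; nra).
  assert (0 < k * k * Rpower (H (Q t)) (/ k) * (w (Q t) * w (Q t))).
  { apply Rmult_lt_0_compat; [|nra]. apply Rmult_lt_0_compat; [nra|exact HR]. }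
  unfold Rdiv. assert (0 < / (k * k * Rpower (H (Q t)) (/ k) * (w (Q t) * w (Q t))))
    by now apply Rinv_0_lt_compat.
  assert ((k + 1) * (k + 1) * (u (Q t) * w (Q t)) < 0) by nra.
  nra.
Qed.

End Fk_derivatives.

(** * The homogeneous function [M (x, y) = x ^ p F (y / x)] *)

Lemma deriv_homogeneous_x (phi phi' : R -> R) e x y : 0 < x -> D phi (y / x) (phi' (y / x)) ->
  D (fun s => Rpower s e * phi (y / s)) x
    (Rpower x (e - 1) * (e * phi (y / x) - y / x * phi' (y / x))).
Proof.
  intros Hx Hd.
  eapply derivable_pt_lim_eq.
  - apply (dmul (fun s => Rpower s e)); [now apply drpow|].
    apply (dcomp phi (fun s => y / s)); [|exact Hd].
    apply (dscal y (fun s => / s)), dinv; [lra|apply did].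
  - rewrite (Rpower_pred x e) by exact Hx. field. lra.
Qed.

Lemma deriv_homogeneous_y (phi phi' : R -> R) e x y : 0 < x -> D phi (y / x) (phi' (y / x)) ->
  D (fun t => Rpower x e * phi (t / x)) y (Rpower x (e - 1) * phi' (y / x)).
Proof.
  intros Hx Hd.
  eapply derivable_pt_lim_eq.
  - apply dscal, (dcomp phi (fun t => t / x)); [|exact Hd].
    apply (derivable_pt_lim_ext (fun t => / x * t)); [intros; unfold Rdiv; ring|].
    apply dscal, did.
  - rewrite (Rpower_pred x e) by exact Hx. field. lra.
Qed.

Lemma homogeneous_hessian_det p F F1 F2 x y : 0 < x -> 0 < y ->
  F2 * (p * (p - 1) * F + F1 / (y / x)) = (p - 1) ^ 2 * F1 ^ 2 ->
  Rpower x (p - 1 - 1) * F2 *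
    (Rpower x (p - 1 - 1) * ((p - 1) * (p * F - y / x * F1) - y / x * ((p - 1) * F1 - y / x * F2))
     + Rpower x (p - 1) * F1 / y)
  - (Rpower x (p - 1 - 1) * ((p - 1) * F1 - y / x * F2)) ^ 2 = 0.
Proof.
  intros Hx Hy Hode. rewrite (Rpower_pred x (p - 1)) by exact Hx.
  set (c := Rpower x (p - 1 - 1)).
  transitivity (c * c * (F2 * (p * (p - 1) * F + F1 / (y / x)) - (p - 1) ^ 2 * F1 ^ 2)).
  - field. lra.
  - rewrite Hode. ring.
Qed.

Lemma nsd2_of_det0 a b c : c * a - b ^ 2 = 0 -> c < 0 -> nsd2 a b c.
Proof.
  intros Hdet Hc u v.
  assert (E : c * (a * u * u + 2 * b * u * v + c * v * v) =
              (b * u + c * v) * (b * u + c * v) + (c * a - b ^ 2) * u * u) by ring.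
  rewrite Hdet in E. assert (0 <= (b * u + c * v) * (b * u + c * v)) by apply Rle_0_sqr.
  nra.
Qed.

Lemma psd2_of_det0 a b c : c * a - b ^ 2 = 0 -> 0 < c -> psd2 a b c.
Proof.
  intros Hdet Hc u v.
  assert (E : c * (a * u * u + 2 * b * u * v + c * v * v) =
              (b * u + c * v) * (b * u + c * v) + (c * a - b ^ 2) * u * u) by ring.
  rewrite Hdet in E. assert (0 <= (b * u + c * v) * (b * u + c * v)) by apply Rle_0_sqr.
  nra.
Qed.

Lemma homogeneous_monge_ampere p (F F1 F2 : R -> R) :
  (forall t, 0 < t -> D F t (F1 t)) -> (forall t, 0 < t -> D F1 t (F2 t)) ->
  (forall t, 0 < t -> F2 t * (p * (p - 1) * F t + F1 t / t) = (p - 1) ^ 2 * F1 t ^ 2) ->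
  let M := fun x y => Rpower x p * F (y / x) in
  exists Mx My Mxx Mxy Myy : R -> R -> R,
    forall x y, 0 < x -> 0 < y ->
      D (fun s => M s y) x (Mx x y) /\ D (fun t => M x t) y (My x y) /\
      D (fun s => Mx s y) x (Mxx x y) /\ D (fun t => Mx x t) y (Mxy x y) /\
      D (fun s => My s y) x (Mxy x y) /\ D (fun t => My x t) y (Myy x y) /\
      Myy x y * (Mxx x y + My x y / y) - Mxy x y ^ 2 = 0 /\
      (F2 (y / x) < 0 -> nsd2 (Mxx x y + My x y / y) (Mxy x y) (Myy x y)) /\
      (0 < F2 (y / x) -> psd2 (Mxx x y + My x y / y) (Mxy x y) (Myy x y)).
Proof.
  intros dF dF1 Hode M.
  set (Psi := fun t => p * F t - t * F1 t).
  set (Psi' := fun t => (p - 1) * F1 t - t * F2 t).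
  assert (dPsi : forall t, 0 < t -> D Psi t (Psi' t)).
  { intros t Ht. unfold Psi, Psi'. eapply derivable_pt_lim_eq.
    - apply dminus; [apply dscal, dF, Ht|apply dmul; [apply did|apply dF1, Ht]].
    - cbv beta. ring. }
  exists (fun x y => Rpower x (p - 1) * Psi (y / x)),
    (fun x y => Rpower x (p - 1) * F1 (y / x)),
    (fun x y => Rpower x (p - 1 - 1) * ((p - 1) * Psi (y / x) - y / x * Psi' (y / x))),
    (fun x y => Rpower x (p - 1 - 1) * Psi' (y / x)),
    (fun x y => Rpower x (p - 1 - 1) * F2 (y / x)).
  intros x y Hx Hy. assert (Ht : 0 < y / x) by (apply Rdiv_lt_0_compat; auto).
  assert (Hdet := homogeneous_hessian_det p (F (y / x)) (F1 (y / x)) (F2 (y / x)) x y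
                    Hx Hy (Hode _ Ht)).
  assert (Hc := Rpower_pos x (p - 1 - 1)).
  repeat split.
  - exact (deriv_homogeneous_x F F1 p x y Hx (dF _ Ht)).
  - exact (deriv_homogeneous_y F F1 p x y Hx (dF _ Ht)).
  - exact (deriv_homogeneous_x Psi Psi' (p - 1) x y Hx (dPsi _ Ht)).
  - exact (deriv_homogeneous_y Psi Psi' (p - 1) x y Hx (dPsi _ Ht)).
  - exact (deriv_homogeneous_x F1 F2 (p - 1) x y Hx (dF1 _ Ht)).
  - exact (deriv_homogeneous_y F1 F2 (p - 1) x y Hx (dF1 _ Ht)).
  - exact Hdet.
  - intros Hneg. apply nsd2_of_det0; [exact Hdet|nra].
  - intros Hpos. apply psd2_of_det0; [exact Hdet|nra].
Qed.

Theorem mainTheorem8 (k : R) (H Hd G : R -> R)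
  (hk0 : k <> 0) (hk1 : k <> -1)
  (hH : is_hermite k H) (hHd : forall x, derivable_pt_lim H x (Hd x))
  (hG : is_hermite (k + 1) G) :
  let M := Mfun k H Hd G in
  (exists Mx My Mxx Mxy Myy : R -> R -> R,
     forall x y, 0 < x -> 0 < y ->
       derivable_pt_lim (fun s => M s y) x (Mx x y) /\
       derivable_pt_lim (fun t => M x t) y (My x y) /\
       derivable_pt_lim (fun s => Mx s y) x (Mxx x y) /\
       derivable_pt_lim (fun t => Mx x t) y (Mxy x y) /\
       derivable_pt_lim (fun s => My s y) x (Mxy x y) /\
       derivable_pt_lim (fun t => My x t) y (Myy x y) /\
       Myy x y * (Mxx x y + My x y / y) - (Mxy x y) ^ 2 = 0 /\
       (-1 < k -> nsd2 (Mxx x y + My x y / y) (Mxy x y) (Myy x y)) /\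
       (k < -1 -> psd2 (Mxx x y + My x y / y) (Mxy x y) (Myy x y))) /\
  (forall x, 0 < x -> M x 0 = Rpower x (1 + / k)).
Proof.
  intros M.
  destruct (hermite_ode_of_is_hermite k H Hd hH hHd) as [H2 ode].
  destruct hH as [_ asymp]. destruct hG as [[G1 [G2 odeG]] asympG].
  assert (G_eq := hermite_succ_eq k H Hd H2 G G1 G2 ode asymp hk0 odeG asympG).
  destruct (homogeneous_monge_ampere (1 + / k) (Fk k H Hd G) (Fk_deriv k H Hd)
              (Fk_deriv2 k H Hd)) as [Mx [My [Mxx [Mxy [Myy HM]]]]].
  - intros t Ht. now apply (deriv_Fk k H Hd H2 G).
  - intros t Ht. now apply (deriv_Fk_deriv k H Hd H2).
  - intros t Ht. replace (1 + / k - 1) with (/ k) by ring.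
    exact (Fk_ode k H Hd H2 G ode asymp hk0 G_eq t Ht).
  - split.
    + exists Mx, My, Mxx, Mxy, Myy. intros x y Hx Hy.
      assert (Hsign := Fk_deriv2_sign k H Hd H2 ode asymp hk0 (y / x) hk1
                         ltac:(apply Rdiv_lt_0_compat; auto)).
      destruct (HM x y Hx Hy) as (dMx & dMy & dMxx & dMxy & dMyx & dMyy & Hdet & Hn & Hp).
      repeat split; auto; intros Hk; [apply Hn|apply Hp]; nra.
    + intros x Hx. unfold M, Mfun, Fk. replace (0 / x) with 0 by (field; lra).
      destruct (Req_EM_T 0 0); [ring|congruence].
Qed.
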